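(* Let $k_1,\dots,k_r$ be pairwise coprime odd integers with $k_i\ge 3$ for all $i$, such that $q=2k_1k_2\cdots k_r+1$ is a prime power. Then there exists a $\left(\frac{q-1}{2},\{k_1,\dots,k_r\}\right)$-MOHS.
   Context: Let $G$ be an abelian group of odd order $2v+1\ge 7$. A half-set of $G$ is a subset $V\subseteq G\setminus\{0\}$ containing exactly one element of each pair $\{g,-g\}$, $g\ne 0$ (so $|V|=v$). A $(v,k)$ Heffter system on $V$ is a partition of $V$ into blocks of size $k$, each block having sum $0$ in $G$. Two Heffter systems on the same half-set are orthogonal if every block of one meets every block of the other in at most one element. A $(v,\{k_1,\dots,k_r\})$-MOHS is a set $\{\mathcal P_1,\dots,\mathcal P_r\}$ of pairwise orthogonal Heffter systems on a common half-set of some abelian group of order $2v+1$, where $\mathcal P_i$ is a $(v,k_i)$ Heffter system. *)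

From HB Require Import structures.
From mathcomp Require Import all_boot all_order all_algebra.
Set Implicit Arguments. Unset Strict Implicit. Unset Printing Implicit Defensive.
Import GRing.Theory.
Local Open Scope ring_scope.

Definition half_set (G : finZmodType) (V : {set G}) : Prop :=
  0 \notin V /\ forall g : G, g != 0 -> (g \in V) (+) (- g \in V).

Definition heffter_system (G : finZmodType) (V : {set G}) (k : nat)
    (P : {set {set G}}) : Prop :=
  partition P V /\
  forall B, B \in P -> #|B| = k /\ \sum_(x in B) x = 0.

Definition orthogonal_systems (G : finZmodType) (P Q : {set {set G}}) : Prop :=
  forall B C, B \in P -> C \in Q -> (#|B :&: C| <= 1)%N.

Definition MOHS (v r : nat) (k : 'I_r -> nat) : Prop :=
  exists G : finZmodType, #|G| = (2 * v + 1)%N /\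
  exists V : {set G}, half_set V /\
  exists P : 'I_r -> {set {set G}},
    (forall i, heffter_system V (k i) (P i)) /\
    (forall i j, i != j -> orthogonal_systems (P i) (P j)).

Definition prime_power (q : nat) : Prop :=
  exists p e : nat, prime p /\ (0 < e)%N /\ q = (p ^ e)%N.
Arguments MOHS : clear implicits.

From mathcomp Require Import all_boot all_order all_algebra all_field.
From mathcomp Require Import cyclic.
Set Implicit Arguments. Unset Strict Implicit. Unset Printing Implicit Defensive.
Import GRing.Theory.
Local Open Scope ring_scope.

(* Work in the field F of order q = 2v + 1, where v = k_1 ... k_r is odd.
   Every nonzero g satisfies g^v = 1 or g^v = -1, and (-g)^v = -g^v, so the
   v-th roots of unity form a half-set V. As k_i divides v, the fibres of
   x |-> x^k_i on V are cosets x<z> of the group of k_i-th roots of unity,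
   so they have size k_i and sum to x(1 + z + ... + z^(k_i - 1)) = 0. Two
   elements with equal k_i-th and k_j-th powers are equal by Bezout, since
   k_i and k_j are coprime: fibres of different exponents meet at most once. *)

Lemma expr_coprime_inj (R : idomainType) m n (a b : R) :
  coprime m n -> a ^+ m = b ^+ m -> a ^+ n = b ^+ n -> a = b.
Proof.
move=> co_mn abm abn; have [m0|m_gt0] := posnP m.
  by move: co_mn; rewrite m0 /coprime gcd0n => /eqP n1; rewrite n1 !expr1 in abn.
have [b0|b_neq0] := eqVneq b 0.
  have : a ^+ m == 0 by rewrite abm b0 expr0n gtn_eqF.
  by rewrite expf_eq0 m_gt0 b0 => /eqP.
have [c _] := Bezoutl n m_gt0; rewrite (eqP co_mn) => /dvdnP[d Dc].
have : a ^+ (1 + c * n) = b ^+ (1 + c * n) by rewrite Dc mulnC !exprM abm.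
rewrite !exprD !expr1 mulnC !exprM abn.
exact/mulIf/expf_neq0/expf_neq0.
Qed.

Lemma prim_root_neq1 (R : nzRingType) n (z : R) :
  (1 < n)%N -> n.-primitive_root z -> z != 1.
Proof.
move=> n_gt1 prim_z.
by rewrite -[z]expr1 -(expr0 z) (eq_prim_root_expr prim_z) mod0n modn_small.
Qed.

Lemma sum_prim_root_expr_eq0 (R : idomainType) n (z : R) :
  (1 < n)%N -> n.-primitive_root z -> \sum_(j < n) z ^+ j = 0.
Proof.
move=> n_gt1 prim_z; have : (z - 1) * \sum_(j < n) z ^+ j = 0.
  by rewrite -subrX1 (prim_expr_order prim_z) subrr.
by move/eqP; rewrite mulf_eq0 subr_eq0 (negbTE (prim_root_neq1 n_gt1 prim_z)) => /eqP.
Qed.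

Lemma preim_partitions_orthogonal (G : finZmodType) (T1 T2 : eqType)
    (f : G -> T1) (g : G -> T2) (D : {set G}) :
  (forall x y, f x = f y -> g x = g y -> x = y) ->
  orthogonal_systems (preim_partition f D) (preim_partition g D).
Proof.
move=> fg_inj B C /imsetP[x _ ->] /imsetP[y _ ->].
apply/card_le1_eqP => a b; rewrite !inE.
move=> /andP[/andP[_ /eqP fxa] /andP[_ /eqP gya]].
move=> /andP[/andP[_ /eqP fxb] /andP[_ /eqP gyb]].
by apply: fg_inj; [rewrite -fxa fxb | rewrite -gya gyb].
Qed.

Section FiniteField.

Variable F : finFieldType.

Definition unity_root_set n := [set x : F | x ^+ n == 1].

Definition pow_fibre n (x : F) := [set y : F | y ^+ n == x ^+ n].

Lemma expf_card_pred (x : F) : x != 0 -> x ^+ #|F|.-1 = 1.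
Proof.
move=> x_neq0; apply: (mulfI x_neq0).
by rewrite mulr1 -exprS prednK ?expf_card // (ltn_trans _ (finNzRing_gt1 F)).
Qed.

Lemma prim_root_dvd_card_pred n :
  (n %| #|F|.-1)%N -> exists z : F, n.-primitive_root z.
Proof.
have units_gt0 : (0 < #|F|.-1)%N by rewrite -subn1 subn_gt0 finNzRing_gt1.
have /hasP[w _ prim_w] : has (#|F|.-1).-primitive_root (enum (predC1 (0 : F))).
  apply: has_prim_root => //; last by rewrite -cardE cardC1.
    by apply/allP => x; rewrite mem_enum !inE => /expf_card_pred/unity_rootP.
  exact: enum_uniq.
by move=> n_dvd; exists (w ^+ (#|F|.-1 %/ n)); apply: dvdn_prim_root.
Qed.

Lemma oppr1_neq1 : odd #|F| -> (-1 : F) != 1.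
Proof.
move=> odd_F; have two_dvd : (2 %| #|F|.-1)%N.
  by rewrite dvdn2 -oddS prednK // ltnW // finNzRing_gt1.
have [z prim_z] := prim_root_dvd_card_pred two_dvd.
have z_neq1 := prim_root_neq1 (ltnSn 1) prim_z.
have : z ^+ 2 == 1 by rewrite prim_expr_order.
by rewrite sqrf_eq1 (negbTE z_neq1) => /eqP <-.
Qed.

Lemma pow_fibreE n (z x : F) :
  n.-primitive_root z -> x != 0 -> pow_fibre n x = [set x * z ^+ (j : 'I_n) | j : 'I_n].
Proof.
move=> prim_z x_neq0; apply/setP => y; rewrite inE; apply/eqP/imsetP.
  move=> xy; have : (y / x) ^+ n = 1 by rewrite expr_div_n xy divff // expf_neq0.
  by move/(prim_rootP prim_z) => [j Dj]; exists j; rewrite // -Dj mulrC divfK.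
move=> [j _ ->].
by rewrite exprMn -exprM mulnC exprM (prim_expr_order prim_z) expr1n mulr1.
Qed.

Lemma prim_root_coset_inj n (z x : F) :
  n.-primitive_root z -> x != 0 -> injective (fun j : 'I_n => x * z ^+ j).
Proof.
move=> prim_z x_neq0 i j /(mulfI x_neq0)/eqP.
by rewrite (eq_prim_root_expr prim_z) !modn_small // => /eqP/val_inj.
Qed.

Lemma card_pow_fibre n (z x : F) :
  n.-primitive_root z -> x != 0 -> #|pow_fibre n x| = n.
Proof.
move=> prim_z x_neq0; rewrite (pow_fibreE prim_z x_neq0) card_imset ?card_ord //.
exact: prim_root_coset_inj.
Qed.

Lemma sum_pow_fibre n (z x : F) :
  (1 < n)%N -> n.-primitive_root z -> x != 0 -> \sum_(y in pow_fibre n x) y = 0.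
Proof.
move=> n_gt1 prim_z x_neq0; rewrite (pow_fibreE prim_z x_neq0) big_imset /=.
  by rewrite -mulr_sumr sum_prim_root_expr_eq0 ?mulr0.
by move=> i j _ _; apply: prim_root_coset_inj.
Qed.

Lemma pow_fibre_subset n k (x : F) :
  (k %| n)%N -> x \in unity_root_set n -> pow_fibre k x \subset unity_root_set n.
Proof.
move=> /dvdnP[d ->] xn; apply/subsetP => y; rewrite !inE => /eqP xy.
by rewrite mulnC !exprM xy -!exprM mulnC inE in xn *.
Qed.

Variable v : nat.
Hypothesis cardF : #|F| = (2 * v + 1)%N.

Let card_pred : #|F|.-1 = (2 * v)%N.
Proof. by rewrite cardF addn1. Qed.

Let v_gt0 : (0 < v)%N.
Proof. by have := finNzRing_gt1 F; rewrite cardF addn1 ltnS muln_gt0. Qed.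

Lemma unity_root_set_neq0 (x : F) : x \in unity_root_set v -> x != 0.
Proof.
by rewrite inE; apply: contraTneq => ->; rewrite expr0n gtn_eqF // eq_sym oner_eq0.
Qed.

Lemma half_set_unity_root_set : odd v -> half_set (unity_root_set v).
Proof.
move=> odd_v; split; first by apply/negP => /unity_root_set_neq0/eqP.
move=> g g_neq0; rewrite !inE exprNn -signr_odd odd_v expr1 mulN1r.
have : (g ^+ v) ^+ 2 == 1 by rewrite -exprM mulnC -card_pred expf_card_pred.
have m1_neq1 : (-1 : F) != 1 by rewrite oppr1_neq1 // cardF oddD oddM.
rewrite sqrf_eq1 => /orP[] /eqP ->; first by rewrite eqxx (negbTE m1_neq1).
by rewrite opprK eqxx (negbTE m1_neq1).
Qed.

Lemma heffter_pow_fibres k :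
  (1 < k)%N -> (k %| v)%N ->
  heffter_system (unity_root_set v) k
    (preim_partition (fun x => x ^+ k) (unity_root_set v)).
Proof.
move=> k_gt1 k_dvd_v; split; first exact: preim_partitionP.
have [z prim_z] : exists z : F, k.-primitive_root z.
  by apply: prim_root_dvd_card_pred; rewrite card_pred dvdn_mull.
move=> B /imsetP[x xV ->]; have x_neq0 := unity_root_set_neq0 xV.
have -> : [set y in unity_root_set v | x ^+ k == y ^+ k] = pow_fibre k x.
  apply/setP => y; rewrite inE [y \in pow_fibre k x]inE eq_sym andb_idl //.
  by move=> xy; apply: (subsetP (pow_fibre_subset k_dvd_v xV)); rewrite inE.
by rewrite (card_pow_fibre prim_z) // (sum_pow_fibre k_gt1 prim_z).
Qed.

End FiniteField.

Theorem theorem1p13 (r : nat) (k : 'I_r -> nat) :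
  (0 < r)%N ->
  (forall i, odd (k i) /\ (3 <= k i)%N) ->
  (forall i j, i != j -> coprime (k i) (k j)) ->
  prime_power (2 * \prod_(i < r) k i + 1) ->
  MOHS ((2 * \prod_(i < r) k i + 1 - 1) %/ 2) r k.
Proof.
move=> _ hk co_k [p [e [p_prime [e_gt0 Dq]]]].
set v := (\prod_(i < r) k i)%N in Dq *.
rewrite addnK mulKn //.
have [F _ cardF] := pPrimePowerField p_prime e_gt0; rewrite -Dq in cardF.
have odd_v : odd v.
  apply: (big_ind odd) => // [a b odd_a odd_b | i _]; first by rewrite oddM odd_a.
  by case: (hk i).
exists F; split; first exact: cardF.
exists (unity_root_set F v); split; first exact: half_set_unity_root_set.
exists (fun i => preim_partition (fun x : F => x ^+ k i) (unity_root_set F v)); split.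
  move=> i; apply: (heffter_pow_fibres cardF); first by have [_ /ltnW] := hk i.
  by rewrite /v (bigD1 i) //= dvdn_mulr.
move=> i j /co_k co_ij; apply: preim_partitions_orthogonal => x y.
exact: expr_coprime_inj.
Qed.
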